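(* Let $\mathcal H$ be a graded connected Hopf algebra over a field $\Bbbk$, let $\zeta\colon\mathcal H\to\Bbbk$ be a character of $\mathcal H$ and $\eta\colon\mathcal H^*\to\Bbbk$ a character of its graded dual (no compatibility between $\zeta$ and $\eta$ is assumed). If $\zeta$ is even (respectively, odd), then each component $\zeta_n=\zeta|_{\mathcal H_n}$ belongs to $S_+(\mathcal H^*,\eta)$ (respectively, $S_-(\mathcal H^*,\eta)$).
   Context: $\mathcal H=\bigoplus_{n\ge0}\mathcal H_n$ is graded connected with finite-dimensional components, and $\mathcal H^*=\bigoplus_n(\mathcal H_n)^*$ is its graded dual Hopf algebra (also graded connected with finite-dimensional components), so $\zeta_n\in\mathcal H^*$ is homogeneous of degree $n$. For any such Hopf algebra $\mathcal K$ and character $\theta$: characters multiply by convolution, $\theta^{-1}=\theta\circ S$, $\bar\theta(k)=(-1)^n\theta(k)$ for $k\in\mathcal K_n$; $\theta$ is even if $\bar\theta=\theta$, odd if $\bar\theta=\theta^{-1}$. $S_+(\mathcal K,\theta)$ (resp. $S_-(\mathcal K,\theta)$) is the largest graded subcoalgebra of $\mathcal K$ on which $\bar\theta$ agrees with $\theta$ (resp. with $\theta^{-1}$). *)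

(* Graded connected Hopf algebras with finite-dimensional
   components, presented by structure constants in a homogeneous basis. *)
From HB Require Import structures.
From mathcomp Require Import all_boot all_order all_algebra.
Set Implicit Arguments. Unset Strict Implicit. Unset Printing Implicit Defensive.
Import GRing.Theory.
Local Open Scope ring_scope.

(* Homogeneous basis labels: b = (n, i) with i < dim n is the i-th basis
   vector of H_n. *)
Definition Bs (d : nat -> nat) := {n : nat & 'I_(d n)}.
Definition mkB (d : nat -> nat) (n : nat) (i : 'I_(d n)) : Bs d :=
  existT (fun m => 'I_(d m)) n i.
Definition deg (d : nat -> nat) (b : Bs d) : nat := projT1 b.

(* Raw data of a graded bialgebra-with-antipode, in a homogeneous basis:
     b1 * b2   = \sum_b mulc b1 b2 b . b
     1         = \sum_b unitc b . b
     Delta b   = \sum_(b1,b2) comc b b1 b2 . b1 (x) b2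
     eps b     = counitc b
     S b       = \sum_b' antic b b' . b'                                *)
Record HopfData (k : fieldType) := HopfDataMk {
  hdim : nat -> nat;
  mulc : Bs hdim -> Bs hdim -> Bs hdim -> k;
  unitc : Bs hdim -> k;
  comc : Bs hdim -> Bs hdim -> Bs hdim -> k;
  counitc : Bs hdim -> k;
  antic : Bs hdim -> Bs hdim -> k }.
Arguments hdim {k} h _.
Arguments mulc {k} h _ _ _.
Arguments unitc {k} h _.
Arguments comc {k} h _ _ _.
Arguments counitc {k} h _.
Arguments antic {k} h _ _.

Section Hopf.
Variables (k : fieldType) (H : HopfData k).
Local Notation B := (Bs (hdim H)).
Local Notation t := (@deg (hdim H)).

Definition sdeg (n : nat) (F : B -> k) : k :=
  \sum_(i < hdim H n) F (@mkB (hdim H) n i).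

Definition graded_ax : Prop :=
  [/\ forall b1 b2 b, mulc H b1 b2 b != 0 -> t b = (t b1 + t b2)%N,
      forall b, unitc H b != 0 -> t b = 0%N,
      forall b b1 b2, comc H b b1 b2 != 0 -> t b = (t b1 + t b2)%N,
      forall b, counitc H b != 0 -> t b = 0%N
    & forall b b', antic H b b' != 0 -> t b' = t b].

Definition connected_ax : Prop := hdim H 0 = 1%N.

Definition algebra_ax : Prop :=
  [/\ (* associativity *)
      forall b1 b2 b3 b,
        sdeg (t b1 + t b2) (fun c => mulc H b1 b2 c * mulc H c b3 b) =
        sdeg (t b2 + t b3) (fun c => mulc H b2 b3 c * mulc H b1 c b),
      (* left unit *)
      forall b1 b, sdeg 0 (fun c => unitc H c * mulc H c b1 b) = (b1 == b)%:R
    & (* right unit *)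
      forall b1 b, sdeg 0 (fun c => unitc H c * mulc H b1 c b) = (b1 == b)%:R].

Definition coalgebra_ax : Prop :=
  [/\ (* coassociativity *)
      forall b b1 b2 b3,
        sdeg (t b1 + t b2) (fun c => comc H b c b3 * comc H c b1 b2) =
        sdeg (t b2 + t b3) (fun c => comc H b b1 c * comc H c b2 b3),
      (* left counit *)
      forall b b1, sdeg 0 (fun c => comc H b c b1 * counitc H c) = (b == b1)%:R
    & (* right counit *)
      forall b b1, sdeg 0 (fun c => comc H b b1 c * counitc H c) = (b == b1)%:R].

Definition bialgebra_ax : Prop :=
  [/\ (* Delta (b1 b2) = Delta b1 * Delta b2 *)
      forall b1 b2 c1 c2,
        sdeg (t b1 + t b2) (fun b => mulc H b1 b2 b * comc H b c1 c2) =
        \sum_(p < (t b1).+1) \sum_(q < (t b2).+1)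
          sdeg p (fun a1 => sdeg (t b1 - p) (fun a2 =>
          sdeg q (fun a3 => sdeg (t b2 - q) (fun a4 =>
            comc H b1 a1 a2 * comc H b2 a3 a4 * mulc H a1 a3 c1 * mulc H a2 a4 c2)))),
      (* Delta 1 = 1 (x) 1 *)
      forall c1 c2, sdeg 0 (fun c => unitc H c * comc H c c1 c2) = unitc H c1 * unitc H c2,
      (* eps (b1 b2) = eps b1 eps b2 *)
      forall b1 b2,
        sdeg (t b1 + t b2) (fun b => mulc H b1 b2 b * counitc H b) =
        counitc H b1 * counitc H b2
    & (* eps 1 = 1 *)
      sdeg 0 (fun c => unitc H c * counitc H c) = 1].

Definition antipode_ax : Prop :=
  (  (* m (S (x) id) Delta = u eps *)
      forall b b',
        \sum_(p < (t b).+1) sdeg p (fun a1 => sdeg (t b - p) (fun a2 =>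
          comc H b a1 a2 * sdeg p (fun a => antic H a1 a * mulc H a a2 b'))) =
        counitc H b * unitc H b')
  /\ (* m (id (x) S) Delta = u eps *)
     (
      forall b b',
        \sum_(p < (t b).+1) sdeg p (fun a1 => sdeg (t b - p) (fun a2 =>
          comc H b a1 a2 * sdeg (t b - p) (fun a => antic H a2 a * mulc H a1 a b'))) =
        counitc H b * unitc H b').

(* H is a graded connected Hopf algebra (finite-dimensional components are
   built in: H_n has dimension hdim H n). *)
Definition graded_connected_hopf : Prop :=
  [/\ graded_ax /\ connected_ax, algebra_ax, coalgebra_ax, bialgebra_ax
    & antipode_ax].

(* A linear functional on H is given by its values on the basis. *)
Definition evalf (phi : B -> k) (n : nat) (x : 'rV[k]_(hdim H n)) : k :=
  \sum_(i < hdim H n) x 0 i * phi (@mkB (hdim H) n i).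

Definition is_character (th : B -> k) : Prop :=
  (forall b1 b2, sdeg (t b1 + t b2) (fun b => mulc H b1 b2 b * th b) = th b1 * th b2)
  /\ sdeg 0 (fun c => unitc H c * th c) = 1.

Definition cbar (th : B -> k) : B -> k := fun b => (-1) ^+ t b * th b.
(* theta^{-1} = theta o S *)
Definition cinv (th : B -> k) : B -> k :=
  fun b => sdeg (t b) (fun b' => antic H b b' * th b').

Definition even_char (th : B -> k) : Prop := forall b, cbar th b = th b.
Definition odd_char (th : B -> k) : Prop := forall b, cbar th b = cinv th b.

(* The degree-(p,q) component of Delta x, for x in H_(p+q), as a tensor in
   H_p (x) H_q written as the matrix of coordinates. *)
Definition Delta_pq (p q : nat) (x : 'rV[k]_(hdim H (p + q))) :
  'M[k]_(hdim H p, hdim H q) :=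
  \matrix_(i, j) \sum_(l < hdim H (p + q))
     x 0 l * comc H (@mkB (hdim H) (p + q) l) (@mkB (hdim H) p i) (@mkB (hdim H) q j).

(* M lies in C_p (x) C_q : it is a finite sum of pure tensors a_l (x) b_l
   with a_l in C_p and b_l in C_q. *)
Definition in_tensor (p q : nat) (Cp : 'M[k]_(hdim H p)) (Cq : 'M[k]_(hdim H q))
  (M : 'M[k]_(hdim H p, hdim H q)) : Prop :=
  exists r (A : 'M[k]_(r, hdim H p)) (Bm : 'M[k]_(r, hdim H q)),
    [/\ (A <= Cp)%MS, (Bm <= Cq)%MS & M = A^T *m Bm].

(* A graded subspace C = (+)_n C_n (C_n = row space of C n) which is a
   subcoalgebra: Delta(C) is contained in C (x) C. *)
Definition graded_subcoalgebra (C : forall n, 'M[k]_(hdim H n)) : Prop :=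
  forall p q (x : 'rV[k]_(hdim H (p + q))),
    (x <= C (p + q)%N)%MS -> @in_tensor p q (C p) (C q) (@Delta_pq p q x).

(* membership of a homogeneous element v of degree n in the largest graded
   subcoalgebra on which the functionals f and g agree *)
Definition in_largest_agree (f g : B -> k) (n : nat) (v : 'rV[k]_(hdim H n)) : Prop :=
  exists C : forall m, 'M[k]_(hdim H m),
    [/\ graded_subcoalgebra C, (v <= C n)%MS &
        forall m (x : 'rV[k]_(hdim H m)), (x <= C m)%MS -> evalf f x = evalf g x].

Definition in_Splus (th : B -> k) n v := @in_largest_agree (cbar th) th n v.
Definition in_Sminus (th : B -> k) n v := @in_largest_agree (cbar th) (cinv th) n v.

End Hopf.
Arguments graded_connected_hopf {k} H.
Arguments is_character {k} H th.
Arguments even_char {k} H th.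
Arguments odd_char {k} H th.
Arguments in_Splus {k} H th n v.
Arguments in_Sminus {k} H th n v.

(* The graded dual H^* = (+)_n (H_n)^*, in the dual basis. *)
Definition hdual (k : fieldType) (H : HopfData k) : HopfData k :=
  @HopfDataMk k (hdim H)
    (fun b1 b2 b => comc H b b1 b2)
    (counitc H)
    (fun b b1 b2 => mulc H b1 b2 b)
    (unitc H)
    (fun b b' => antic H b' b).

(* zeta_n = zeta restricted to H_n, as an element of (H_n)^* subset H^*,
   in dual-basis coordinates. *)
Definition zeta_comp {k : fieldType} (H : HopfData k) (z : Bs (hdim H) -> k)
  (n : nat) : 'rV[k]_(hdim (hdual H) n) :=
  \row_(i < hdim H n) z (@mkB (hdim H) n i).
Arguments zeta_comp {k} H z n.

(* The subspace of the graded dual spanned by the homogeneous components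
   zeta_n of a character zeta is a graded subcoalgebra, since multiplicativity
   of zeta says exactly Delta(zeta_(p+q)) = zeta_p (x) zeta_q in bidegree (p,q).
   On zeta_n, pairing with the sign twist of eta is pairing eta with the sign
   twist of zeta, and pairing with eta o S^* is pairing eta with zeta o S.
   So bar eta agrees with eta (resp. eta^-1) on this subcoalgebra as soon as
   bar zeta = zeta (resp. bar zeta = zeta^-1). *)
From mathcomp Require Import all_boot all_order all_algebra.
Set Implicit Arguments. Unset Strict Implicit. Unset Printing Implicit Defensive.
Import GRing.Theory.
Local Open Scope ring_scope.

Lemma sub_genmx_rowP (k : fieldType) n (v x : 'rV[k]_n) :
  (x <= <<v>>)%MS -> exists c, x = c *: v.
Proof.
rewrite genmxE => /submxP [D ->]; exists (D 0 0).
by rewrite {1}(mx11_scalar D) mul_scalar_mx.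
Qed.

Section Linearity.
Variables (k : fieldType) (H : HopfData k).

Lemma evalfZ (phi : Bs (hdim H) -> k) n c (x : 'rV[k]_(hdim H n)) :
  evalf phi (c *: x) = c * evalf phi x.
Proof. by rewrite /evalf mulr_sumr; apply: eq_bigr => i _; rewrite mxE mulrA. Qed.

Lemma Delta_pqZ p q c (x : 'rV[k]_(hdim H (p + q))) :
  Delta_pq (c *: x) = c *: Delta_pq x.
Proof.
apply/matrixP => i j; rewrite !mxE mulr_sumr.
by apply: eq_bigr => l _; rewrite mxE mulrA.
Qed.

End Linearity.

Section CharacterSpan.
Variables (k : fieldType) (H : HopfData k).
Local Notation B := (Bs (hdim H)).

Lemma eq_zeta_comp (f g : B -> k) :
  (forall b, f b = g b) -> forall n, zeta_comp H f n = zeta_comp H g n.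
Proof. by move=> fg n; apply/rowP => i; rewrite !mxE. Qed.

Lemma Delta_pq_character (zeta : B -> k) p q :
  is_character H zeta ->
  Delta_pq (H := hdual H) (p := p) (zeta_comp H zeta (p + q)) =
  (zeta_comp H zeta p)^T *m zeta_comp H zeta q.
Proof.
move=> [zetaM _]; apply/matrixP => i j; rewrite !mxE big_ord1 !mxE.
rewrite -zetaM /sdeg; apply: eq_bigr => l _.
by rewrite mxE mulrC.
Qed.

Lemma character_span_subcoalgebra (zeta : B -> k) :
  is_character H zeta ->
  graded_subcoalgebra (H := hdual H) (fun m => <<zeta_comp H zeta m>>%MS).
Proof.
move=> zeta_char p q x /sub_genmx_rowP [c ->].
exists 1%N, (zeta_comp H zeta p), (c *: zeta_comp H zeta q); split.
- by rewrite genmxE.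
- by rewrite genmxE scalemx_sub.
by rewrite Delta_pqZ Delta_pq_character // scalemxAr.
Qed.

Lemma evalf_dual_cbar (phi zeta : B -> k) n :
  evalf (cbar (H := hdual H) phi) (zeta_comp H zeta n) =
  evalf phi (zeta_comp H (cbar zeta) n).
Proof.
by apply: eq_bigr => i _; rewrite !mxE /cbar /deg /= mulrCA mulrA.
Qed.

Lemma evalf_dual_cinv (phi zeta : B -> k) n :
  evalf (cinv (H := hdual H) phi) (zeta_comp H zeta n) =
  evalf phi (zeta_comp H (cinv zeta) n).
Proof.
rewrite /evalf /cinv /sdeg /deg /=.
under eq_bigr do rewrite mxE mulr_sumr.
under [RHS]eq_bigr do rewrite mxE mulr_suml.
rewrite exchange_big; apply: eq_bigr => j _; apply: eq_bigr => i _.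
by rewrite mulrCA mulrA.
Qed.

Lemma in_largest_agree_character (f g zeta : B -> k) n :
  is_character H zeta ->
  (forall m, evalf (H := hdual H) f (zeta_comp H zeta m) =
             evalf (H := hdual H) g (zeta_comp H zeta m)) ->
  in_largest_agree (H := hdual H) f g (zeta_comp H zeta n).
Proof.
move=> zeta_char fg; exists (fun m => <<zeta_comp H zeta m>>%MS); split.
- exact: character_span_subcoalgebra.
- by rewrite genmxE.
by move=> m x /sub_genmx_rowP [c ->]; rewrite !evalfZ fg.
Qed.

End CharacterSpan.

Theorem proposition5p9 (k : fieldType) (H : HopfData k) :
  graded_connected_hopf H ->
  forall (zeta : Bs (hdim H) -> k) (eta : Bs (hdim (hdual H)) -> k),
    is_character H zeta ->
    is_character (hdual H) eta ->
    (even_char H zeta -> forall n, in_Splus (hdual H) eta n (zeta_comp H zeta n)) /\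
    (odd_char H zeta -> forall n, in_Sminus (hdual H) eta n (zeta_comp H zeta n)).
Proof.
move=> _ zeta eta zeta_char _; split=> zeta_parity n;
  apply: in_largest_agree_character => // m; rewrite evalf_dual_cbar.
- by rewrite (eq_zeta_comp zeta_parity).
- by rewrite evalf_dual_cinv (eq_zeta_comp zeta_parity).
Qed.
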